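(* For every $q=2^l$ with $l\ge3$ there is a quantum CSS code over $\mathbb F_q$ of length $n=3q/4$, dimension $q/4$ and distance at least $\lfloor q/3\rfloor-q/4+1$, together with an orthonormal basis $\{|\bar x\rangle: x\in\mathbb F_q^{q/4}\}$ of its code space, such that for all $x,y,z\in\mathbb F_q^{q/4}$, $$\big(\mathsf{CCZ}^{(q)}\big)^{\otimes n}|\bar x\rangle|\bar y\rangle|\bar z\rangle=(-1)^{\mathrm{tr}\left(\sum_{i=1}^{q/4}x_iy_iz_i\right)}|\bar x\rangle|\bar y\rangle|\bar z\rangle,$$ i.e. transversal $\mathsf{CCZ}^{(q)}$ acts as $(\overline{\mathsf{CCZ}^{(q)}})^{\otimes q/4}$ on the logical qudits.
   Context: A qudit has Hilbert space $\mathbb C^q$ with basis $\{|x\rangle:x\in\mathbb F_q\}$. $\mathrm{tr}:\mathbb F_q\to\mathbb F_2$ is $\mathrm{tr}(x)=\sum_{i=0}^{l-1}x^{2^i}$ and $\mathsf{CCZ}^{(q)}|x\rangle|y\rangle|z\rangle=(-1)^{\mathrm{tr}(xyz)}|x\rangle|y\rangle|z\rangle$; $(\mathsf{CCZ}^{(q)})^{\otimes n}$ acts on three code blocks, coordinatewise. For linear codes $C_2^\perp\subseteq C_1\subseteq\mathbb F_q^n$, the CSS code $\mathrm{CSS}(C_1,C_2)$ is spanned by $\sum_{\alpha\in C_2^\perp}|c+\alpha\rangle$, $c\in C_1$, has dimension $\dim C_1-\dim C_2^\perp$ and distance equal to the minimum Hamming weight of $(C_1\setminus C_2^\perp)\cup(C_2\setminus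 C_1^\perp)$, with $\perp$ taken for the bilinear form $\sum_i u_iv_i$. *)

From HB Require Import structures.
From mathcomp Require Import all_boot all_order all_algebra.
From mathcomp Require Import algC.
Set Implicit Arguments. Unset Strict Implicit. Unset Printing Implicit Defensive.
Import Order.TTheory GRing.Theory Num.Theory.
Local Open Scope ring_scope.

(* Vectors of F^n are
   row vectors 'rV[F]_n; linear codes are row spaces of n x n matrices
   (mxalgebra, %MS).  Quantum states on one block of n qudits are
   functions 'rV[F]_n -> algC (amplitude of the basis state |u>). *)

Section Defs.
Variable F : finFieldType.

Definition ftrace (l : nat) (x : F) : F := \sum_(i < l) x ^+ (2 ^ i).

(* (-1)^t for t in F_2 (t = 0 or 1 in F). *)
Definition sgn1 (t : F) : algC := if t == 0 then 1 else -1.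

(* dual code w.r.t. the bilinear form sum_i u_i v_i:
   C^perp = {u | u *m v^T = 0 for all rows v of C} = row kernel of C^T. *)
Definition dualC n (C : 'M[F]_n) : 'M[F]_n := kermx C^T.

Definition wt n (u : 'rV[F]_n) : nat := #|[set i : 'I_n | u 0 i != 0]|.

Definition coset_state n (D : 'M[F]_n) (c : 'rV[F]_n) : 'rV[F]_n -> algC :=
  fun u => \sum_(a : 'rV[F]_n | (a <= D)%MS) (u == c + a)%:R.

(* psi lies in the code space of CSS(C1,C2), i.e. in the span of the
   coset states sum_{alpha in C2^perp} |c + alpha>, c in C1. *)
Definition in_css n (C1 C2 : 'M[F]_n) (psi : 'rV[F]_n -> algC) : Prop :=
  exists a : 'rV[F]_n -> algC, forall u,
    psi u = \sum_(c : 'rV[F]_n | (c <= C1)%MS) a c * coset_state (dualC C2) c u.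

Definition inner n (phi psi : 'rV[F]_n -> algC) : algC :=
  \sum_(u : 'rV[F]_n) (phi u)^* * psi u.

(* Eigenvalue of (CCZ^(q))^{(x) n} on |u>|v>|w> (it is diagonal):
   product over coordinates of (-1)^tr(u_i v_i w_i). *)
Definition ccz_n (l : nat) n (u v w : 'rV[F]_n) : algC :=
  \prod_(i < n) sgn1 (ftrace l (u 0 i * v 0 i * w 0 i)).

End Defs.

(* Split F into points alpha_1..alpha_n and beta_1..beta_k (n = 3q/4, k = q/4)
   and put m = q/3.  C evaluates the polynomials of degree < m at the alphas,
   D is the subcode of those divisible by V = prod_j ('X - beta_j), and the
   logical word x labels the coset of D formed by the P with P(beta_j) = x_j;
   the uniform superpositions over these cosets are the basis of CSS(C, D^perp).
   A nonzero word of C has fewer than m zeros, and a word of D^perp of weight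
   at most m - k fails to be orthogonal to a suitable V * g.  For CCZ: if
   u, v, w are evaluations of P, Q, R, then PQR has degree < q - 1, so it sums
   to 0 over F; in characteristic 2 this says sum_i u_i v_i w_i =
   sum_j x_j y_j z_j, and the trace is additive. *)

From HB Require Import structures.
From mathcomp Require Import all_boot all_order all_algebra all_field.
From mathcomp Require Import algC zify.
Set Implicit Arguments. Unset Strict Implicit. Unset Printing Implicit Defensive.
Import Order.TTheory GRing.Theory Num.Theory.
Local Open Scope ring_scope.

Section FinFieldSums.
Variable F : finFieldType.

Lemma natr_card_finField : (#|F|%:R : F) = 0.
Proof.
have [p _ charp] := finPcharP F.
have cardF : #|F| = (p ^ logn p #|F|)%N := card_pprimeChar charp.
apply/eqP; rewrite -(dvdn_pcharf charp) cardF.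
case: (logn p #|F|) cardF => [|e] cardF; last by rewrite expnS dvdn_mulr.
by have := finNzRing_gt1 F; rewrite cardF.
Qed.

Lemma sum_expr_eq0 j : (j < #|F|.-1)%N -> \sum_(t : F) t ^+ j = 0.
Proof.
case: j => [|j] ltj; first by rewrite (eq_bigr (fun=> 1)) ?sumr_const ?natr_card_finField.
(* ['X^j.+1 - 1] has fewer than [#|F| - 1] roots *)
have [c c_neq0 cj_neq1] : exists2 c : F, c != 0 & c ^+ j.+1 != 1.
  apply/exists_inP; apply: contraT; rewrite negb_exists_in => /forall_inP cj1.
  have Xj_neq0 : ('X^(j.+1) - 1 : {poly F}) != 0.
    by rewrite -size_poly_eq0 -polyC1 size_XnsubC.
  suff rts : all (root ('X^(j.+1) - 1)) (enum (predC1 (0 : F))).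
    have := max_poly_roots Xj_neq0 rts.
    by rewrite enum_uniq -polyC1 size_XnsubC // -cardE cardC1 ltnS leqNgt ltj => /(_ isT).
  apply/allP => t; rewrite mem_enum /root !hornerE => /cj1.
  by rewrite negbK subr_eq0.
have : (c ^+ j.+1 - 1) * \sum_(t : F) t ^+ j.+1 = 0.
  apply/eqP; rewrite mulrBl mul1r subr_eq0 mulr_sumr; apply/eqP.
  rewrite [RHS](reindex_inj (mulfI c_neq0)) /=.
  by apply/eq_bigr => t _; rewrite exprMn.
by move/eqP; rewrite mulf_eq0 subr_eq0 (negbTE cj_neq1) => /eqP.
Qed.

Lemma sum_horner_eq0 (Q : {poly F}) :
  (size Q <= #|F|.-1)%N -> \sum_(t : F) Q.[t] = 0.
Proof.
move=> szQ; under eq_bigr do rewrite horner_coef.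
rewrite exchange_big big1 // => j _.
by rewrite -mulr_sumr sum_expr_eq0 ?mulr0 // (leq_trans (ltn_ord j)).
Qed.

End FinFieldSums.

Section Trace.
Variables (F : finFieldType) (l : nat).
Hypothesis cardF : #|F| = (2 ^ l)%N.

Lemma pchar2 : (2 \in [pchar F])%N.
Proof. exact: card_finPcharP cardF isT. Qed.

Lemma ftraceD (x y : F) : ftrace l (x + y) = ftrace l x + ftrace l y.
Proof.
rewrite /ftrace -big_split; apply: eq_bigr => i _.
by rewrite exprDn_pchar // pnatX pnatE // pchar2.
Qed.

Lemma ftrace0 : ftrace l (0 : F) = 0.
Proof. by rewrite /ftrace big1 // => i _; rewrite expr0n expn_eq0. Qed.

Lemma ftrace_sqr (x : F) : ftrace l x ^+ 2 = ftrace l x.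
Proof.
have sqrD (y z : F) : (y + z) ^+ 2 = y ^+ 2 + z ^+ 2.
  by rewrite exprDn_pchar // pnatE // pchar2.
rewrite /ftrace (big_morph _ sqrD (expr0n F 2 : 0 ^+ 2 = 0)).
under eq_bigr do rewrite -exprM -expnSr.
(* both sums equal [\sum_(i < l.+1) x ^+ (2 ^ i) - x], as [x ^+ (2 ^ l) = x] *)
apply: (addrI x).
have := @big_ord_recl F 0 +%R l (fun i : 'I_l.+1 => x ^+ (2 ^ i)).
rewrite big_ord_recr /= -cardF expf_card expn0 expr1 => <-.
by rewrite addrC.
Qed.

Lemma ftrace01 (x : F) : (ftrace l x == 0) || (ftrace l x == 1).
Proof.
have : ftrace l x * (ftrace l x - 1) == 0 by rewrite mulrBr mulr1 -expr2 ftrace_sqr subrr.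
by rewrite mulf_eq0 subr_eq0.
Qed.

Lemma sgn1_ftraceD (x y : F) :
  sgn1 (ftrace l (x + y)) = sgn1 (ftrace l x) * sgn1 (ftrace l y).
Proof.
rewrite ftraceD /sgn1.
case/orP: (ftrace01 x) => /eqP ->; case/orP: (ftrace01 y) => /eqP ->;
  rewrite ?addr0 ?add0r ?eqxx ?oner_eq0 ?mul1r ?mulr1 //.
by rewrite addrr_pchar2 ?pchar2 // eqxx mulrNN mulr1.
Qed.

Lemma prod_sgn1_ftrace N (f : 'I_N -> F) :
  \prod_(i < N) sgn1 (ftrace l (f i)) = sgn1 (ftrace l (\sum_(i < N) f i)).
Proof.
symmetry; apply: (big_morph (fun t => sgn1 (ftrace l t))) => [t u|].
  exact: sgn1_ftraceD.
by rewrite ftrace0 /sgn1 eqxx.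
Qed.

End Trace.

Lemma leq_size_polyB (R : nzRingType) (P Q : {poly R}) N :
  (size P <= N)%N -> (size Q <= N)%N -> (size (P - Q)%R <= N)%N.
Proof.
by move=> szP szQ; rewrite (leq_trans (size_polyD _ _)) // geq_max size_polyN szP.
Qed.

Section EvaluationCodes.
Variables (F : fieldType) (n : nat) (a : 'rV[F]_n).
Implicit Types (P Q W g : {poly F}) (u : 'rV[F]_n).

Definition evalrV (P : {poly F}) : 'rV[F]_n := map_mx (horner P) a.

Lemma evalrVE P i : evalrV P 0 i = P.[a 0 i].
Proof. by rewrite mxE. Qed.

Lemma evalrVB P Q : evalrV (P - Q) = evalrV P - evalrV Q.
Proof. by apply/rowP => i; rewrite !mxE hornerD hornerN. Qed.

Lemma mul_rV_Vandermonde r (w : 'rV[F]_r) :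
  w *m Vandermonde r a = evalrV (rVpoly w).
Proof.
apply/rowP => i; rewrite !mxE horner_poly; apply: eq_bigr => j _.
by rewrite mxE valK.
Qed.

Lemma evalrV_mul_diag P W : evalrV P *m diag_mx (evalrV W) = evalrV (W * P).
Proof. by apply/rowP => i; rewrite mul_mx_diag !mxE hornerM mulrC. Qed.

Lemma sub_VandermondeP r u :
  reflect (exists2 P : {poly F}, (size P <= r)%N & u = evalrV P) (u <= Vandermonde r a)%MS.
Proof.
apply: (iffP submxP) => [[w ->] | [P szP ->]].
  by exists (rVpoly w); rewrite ?size_poly ?mul_rV_Vandermonde.
by exists (poly_rV P); rewrite mul_rV_Vandermonde poly_rV_K.
Qed.

Lemma sub_Vandermonde_diagP r W u :
  reflect (exists2 g : {poly F}, (size g <= r)%N & u = evalrV (W * g))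
          (u <= Vandermonde r a *m diag_mx (evalrV W))%MS.
Proof.
apply: (iffP submxP) => [[w ->] | [g szg ->]].
  by exists (rVpoly w); rewrite ?size_poly // mulmxA mul_rV_Vandermonde evalrV_mul_diag.
by exists (poly_rV g); rewrite mulmxA mul_rV_Vandermonde poly_rV_K ?evalrV_mul_diag.
Qed.

Hypothesis a_inj : injective (a 0).

Lemma evalrV_eq0 P : (size P <= n)%N -> (evalrV P == 0) = (P == 0).
Proof.
move=> szP; apply/idP/idP => [/eqP P0 | /eqP ->]; last first.
  by apply/eqP/rowP => i; rewrite !mxE horner0.
apply/eqP/(roots_geq_poly_eq0 (rs := [seq a 0 i | i <- enum 'I_n])).
- by apply/allP => _ /mapP [i _ ->]; rewrite /root -evalrVE P0 mxE.
- by rewrite map_inj_uniq ?enum_uniq.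
- by rewrite size_map size_enum_ord.
Qed.

Lemma row_free_Vandermonde r : (r <= n)%N -> row_free (Vandermonde r a).
Proof.
move=> le_rn; rewrite -kermx_eq0; apply/rowV0P => w /sub_kermxP.
rewrite mul_rV_Vandermonde => /eqP; rewrite evalrV_eq0; last first.
  exact: leq_trans (size_poly _ _) le_rn.
by move=> /eqP/(congr1 (@poly_rV F r)); rewrite rVpolyK linear0.
Qed.

Definition interp (x : 'rV[F]_n) : {poly F} :=
  rVpoly (x *m invmx (Vandermonde n a)).

Lemma size_interp x : (size (interp x) <= n)%N.
Proof. exact: size_poly. Qed.

Lemma evalrV_interp x : evalrV (interp x) = x.
Proof.
by rewrite -mul_rV_Vandermonde mulmxKV // -row_free_unit row_free_Vandermonde.
Qed.

End EvaluationCodes.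

Section EvaluationCodeWeights.
Variables (F : finFieldType) (n : nat) (a : 'rV[F]_n).
Implicit Types (P W g : {poly F}) (u : 'rV[F]_n).
Hypothesis a_inj : injective (a 0).

Lemma wt_evalrV P : P != 0 -> (n < wt (evalrV a P) + size P)%N.
Proof.
move=> P_neq0; set Z := [set i | P.[a 0 i] == 0].
have ltZ : (#|Z| < size P)%N.
  rewrite cardE -(size_map (a 0)) max_poly_roots ?map_inj_uniq ?enum_uniq //.
  by apply/allP => z /mapP [i]; rewrite mem_enum inE => /eqP Pi0 ->; apply/eqP.
have -> : wt (evalrV a P) = #|~: Z| by apply: eq_card => i; rewrite !inE mxE.
by move: ltZ (cardsC Z); rewrite card_ord; lia.
Qed.

(* Against a word [u] of weight at most [r], test with [W * g], where [g]
   vanishes on the support of [u] except at one point. *)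
Lemma wt_dual_evalrV r W u : (forall i, W.[a 0 i] != 0) ->
    (forall g, (size g <= r)%N -> \sum_i u 0 i * (W * g).[a 0 i] = 0) ->
  u != 0 -> (r < wt u)%N.
Proof.
move=> W_neq0 u_orth u_neq0; rewrite ltnNge; apply/negP => wt_le_r.
have [i0 ui0_neq0] : exists i0, u 0 i0 != 0.
  apply/existsP; apply: contraR u_neq0; rewrite negb_exists => /forallP u0.
  by apply/eqP/rowP => i; rewrite mxE; apply/eqP; rewrite -[_ == _]negbK u0.
set S := [set i | u 0 i != 0].
set g := \prod_(z <- [seq a 0 i | i <- enum (S :\ i0)]) ('X - z%:P).
have szg : (size g <= r)%N.
  rewrite size_prod_XsubC size_map -cardE.
  by move: wt_le_r; rewrite /wt -/S (cardsD1 i0 S) inE ui0_neq0.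
have g_root i : i != i0 -> u 0 i * (W * g).[a 0 i] = 0.
  move=> neq_i0; have [iS | /negPn/eqP ->] := boolP (u 0 i != 0); last first.
    by rewrite mul0r.
  have : root g (a 0 i) by rewrite root_prod_XsubC map_f // mem_enum !inE neq_i0.
  by rewrite hornerM => /eqP ->; rewrite !mulr0.
have := u_orth g szg; rewrite (bigD1 i0) //= big1 ?addr0 //.
apply/eqP; rewrite hornerM !mulf_neq0 //.
by rewrite -/(root _ _) root_prod_XsubC mem_map ?mem_enum ?inE ?eqxx.
Qed.

End EvaluationCodeWeights.

Section DualCode.
Variables (F : finFieldType) (n : nat).
Implicit Types (D : 'M[F]_n) (u v w : 'rV[F]_n).

Lemma dualCK D : (dualC (dualC D) :=: D)%MS.
Proof.
have D_sub : (D <= dualC (dualC D))%MS.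
  by apply/sub_kermxP; rewrite -[X in X *m _]trmxK -trmx_mul mulmx_ker trmx0.
apply/eqmxP; apply/andP; split=> //.
have [_ <-] := mxrank_leqif_sup D_sub.
by rewrite /dualC !(mxrank_ker, mxrank_tr) subKn ?rank_leq_row.
Qed.

Lemma dualC_orthogonal D u v :
  (u <= dualC D)%MS -> (v <= D)%MS -> \sum_i u 0 i * v 0 i = 0.
Proof.
move=> /sub_kermxP uD /submxP [w ->].
have : (u *m (w *m D)^T) 0 0 = 0 by rewrite trmx_mul mulmxA uD mul0mx mxE.
by rewrite mxE; under eq_bigr do rewrite mxE.
Qed.

Lemma coset_sym D u v : (u - v <= D)%MS = (v - u <= D)%MS.
Proof. by rewrite -opprB eqmx_opp. Qed.

Lemma coset_trans D u v w :
  (u - v <= D)%MS -> (v - w <= D)%MS -> (u - w <= D)%MS.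
Proof. by move=> uv vw; rewrite -(subrK v u) -addrA addmx_sub. Qed.

Lemma coset_state_dualCK D c u :
  coset_state (dualC (dualC D)) c u = (u - c <= D)%MS%:R.
Proof.
rewrite /coset_state (eq_bigl (fun a => (a <= D)%MS)) => [|a]; last by rewrite dualCK.
have [uc_in | uc_notin] := boolP (u - c <= D)%MS.
  rewrite (bigD1 (u - c)) //= subrKC eqxx big1 ?addr0 // => a /andP [_ a_neq].
  by case: eqP => // uca; rewrite uca (addrC c) addrK eqxx in a_neq.
by apply: big1 => a aD; case: eqP => // uca; rewrite uca (addrC c) addrK aD in uc_notin.
Qed.

End DualCode.

Section CosetBasis.
Variables (F : finFieldType) (n k : nat) (C D : 'M[F]_n).
Variable enc : 'rV[F]_k -> 'rV[F]_n.
Hypothesis enc_sub : forall x, (enc x <= C)%MS.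
Hypothesis enc_inj : forall x y, (enc x - enc y <= D)%MS -> x = y.
Hypothesis enc_onto : forall c, (c <= C)%MS -> exists x, (c - enc x <= D)%MS.

Definition coset_card : nat := #|[set v : 'rV[F]_n | (v <= D)%MS]|.

Definition coset_basis (x : 'rV[F]_k) (u : 'rV[F]_n) : algC :=
  (u - enc x <= D)%MS%:R / sqrtC coset_card%:R.

Lemma coset_card_gt0 : (0 < coset_card)%N.
Proof. by apply/card_gt0P; exists 0; rewrite inE sub0mx. Qed.

Lemma sum_coset (c : 'rV[F]_n) :
  \sum_(u : 'rV[F]_n) (u - c <= D)%MS%:R = coset_card%:R :> algC.
Proof.
rewrite (reindex_inj (addIr c)) /=; under eq_bigr do rewrite addrK.
rewrite -natr_sum /coset_card -sum1_card; congr _%:R.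
by rewrite [RHS]big_mkcond; apply: eq_bigr => u _; rewrite inE; case: (u <= D)%MS.
Qed.

Lemma in_css_coset_basis x : in_css C (dualC D) (coset_basis x).
Proof.
exists (fun c => (c == enc x)%:R / sqrtC coset_card%:R) => u.
rewrite (bigD1 (enc x)) ?enc_sub //= eqxx big1 ?addr0 => [|c /andP [_ /negbTE ->]].
  by rewrite coset_state_dualCK mulrAC mul1r.
by rewrite !mul0r.
Qed.

Lemma coset_basis_orthonormal x y :
  inner (coset_basis x) (coset_basis y) = (x == y)%:R.
Proof.
have Ninv_conj : (sqrtC coset_card%:R)^-1^* = (sqrtC coset_card%:R)^-1 :> algC.
  by apply/conj_Creal; rewrite rpredV sqrtC_real ?ler0n.
rewrite /inner /coset_basis.
under eq_bigr do rewrite rmorphM /= rmorph_nat Ninv_conj mulrACA -invfM -expr2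
  sqrtCK -natrM mulnb.
rewrite -mulr_suml; have [<- | x_neq_y] := eqVneq x y.
  under eq_bigr do rewrite andbb.
  by rewrite sum_coset mulfV // pnatr_eq0 -lt0n coset_card_gt0.
rewrite big1 ?mul0r // => u _.
case: (boolP (u - enc x <= D)%MS) => // ux; case: (boolP (u - enc y <= D)%MS) => // uy.
by case/eqP: x_neq_y; apply: enc_inj; rewrite coset_sym in ux; apply: coset_trans ux uy.
Qed.

Lemma coset_indicator_decomp (c u : 'rV[F]_n) : (c <= C)%MS ->
  (u - c <= D)%MS%:R =
    \sum_x (c - enc x <= D)%MS%:R * (u - enc x <= D)%MS%:R :> algC.
Proof.
move=> /enc_onto [x0 cx0]; rewrite (bigD1 x0) //= cx0 mul1r big1 ?addr0.
  congr ((nat_of_bool _)%:R); apply/idP/idP => [uc | ux0]; first exact: coset_trans uc cx0.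
  by apply: coset_trans ux0 _; rewrite coset_sym.
move=> x x_neq; case: (boolP (c - enc x <= D)%MS) => cx; rewrite ?mul0r //.
by case/eqP: x_neq; apply: enc_inj; rewrite coset_sym in cx; apply: coset_trans cx cx0.
Qed.

Lemma coset_basis_spanning psi : in_css C (dualC D) psi ->
  exists b : 'rV[F]_k -> algC, forall u, psi u = \sum_x b x * coset_basis x u.
Proof.
case=> a psiE.
exists (fun x => sqrtC coset_card%:R *
          \sum_(c | (c <= C)%MS) a c * (c - enc x <= D)%MS%:R) => u.
have sqrtN_neq0 : sqrtC coset_card%:R != 0 :> algC.
  by rewrite sqrtC_eq0 pnatr_eq0 -lt0n coset_card_gt0.
rewrite psiE; under eq_bigr => c cC.
  rewrite coset_state_dualCK (coset_indicator_decomp u cC) mulr_sumr.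
  over.
rewrite exchange_big; apply: eq_bigr => x _ /=.
rewrite /coset_basis [RHS]mulrC mulrA divfK // mulrC mulr_suml.
by apply: eq_bigr => c _; rewrite mulrA.
Qed.

End CosetBasis.

Section TransversalCCZCode.
Variables (F : finFieldType) (n k m : nat) (e : 'I_(n + k) -> F).
Hypotheses (e_bij : bijective e) (le_km : (k <= m)%N) (le_mn : (m <= n)%N).
Implicit Types (P Q g : {poly F}) (u v w : 'rV[F]_n) (x y z : 'rV[F]_k).

Definition alpha : 'rV[F]_n := \row_i e (lshift k i).
Definition beta : 'rV[F]_k := \row_j e (rshift n j).

Lemma alpha_inj : injective (alpha 0).
Proof. by move=> i j; rewrite !mxE => /(bij_inj e_bij)/lshift_inj. Qed.

Lemma beta_inj : injective (beta 0).
Proof. by move=> i j; rewrite !mxE => /(bij_inj e_bij)/rshift_inj. Qed.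

Lemma alpha_neq_beta i j : alpha 0 i != beta 0 j.
Proof. by rewrite !mxE (inj_eq (bij_inj e_bij)) eq_lrshift. Qed.

Lemma sum_alpha_beta (f : F -> F) :
  \sum_(t : F) f t = \sum_i f (alpha 0 i) + \sum_j f (beta 0 j).
Proof.
rewrite (reindex e) ?big_split_ord; last exact: onW_bij.
by congr (_ + _); apply: eq_bigr => i _; rewrite mxE.
Qed.

Definition vbeta : {poly F} := \prod_(t <- codom (beta 0)) ('X - t%:P).

Lemma size_vbeta : size vbeta = k.+1.
Proof. by rewrite size_prod_XsubC size_codom card_ord. Qed.

Lemma root_vbeta j : root vbeta (beta 0 j).
Proof. by rewrite root_prod_XsubC codom_f. Qed.

Lemma vbeta_alpha_neq0 i : vbeta.[alpha 0 i] != 0.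
Proof.
rewrite -/(root _ _) root_prod_XsubC; apply/codomP => -[j].
by apply/eqP; rewrite alpha_neq_beta.
Qed.

Definition code_C : 'M[F]_n := <<Vandermonde m alpha>>%MS.
Definition code_D : 'M[F]_n :=
  <<Vandermonde (m - k) alpha *m diag_mx (evalrV alpha vbeta)>>%MS.

Lemma sub_code_CP u :
  reflect (exists2 P : {poly F}, (size P <= m)%N & u = evalrV alpha P) (u <= code_C)%MS.
Proof. by rewrite genmxE; apply: sub_VandermondeP. Qed.

Lemma sub_code_DP u :
  reflect (exists2 g : {poly F}, (size g <= m - k)%N & u = evalrV alpha (vbeta * g))
          (u <= code_D)%MS.
Proof. by rewrite genmxE; apply: sub_Vandermonde_diagP. Qed.

Lemma size_vbetaM g : (size g <= m - k)%N -> (size (vbeta * g)%R <= m)%N.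
Proof.
have [-> | g_neq0] := eqVneq g 0; first by rewrite mulr0 size_poly0.
move=> szg; rewrite size_mul //; last by rewrite -size_poly_eq0 size_vbeta.
by rewrite size_vbeta addSn /= -(subnKC le_km) leq_add2l.
Qed.

Lemma rank_code_C : \rank code_C = m.
Proof. by rewrite mxrank_gen; apply/eqP/(row_free_Vandermonde alpha_inj le_mn). Qed.

Lemma rank_code_D : \rank code_D = (m - k)%N.
Proof.
rewrite mxrank_gen mxrankMfree; last first.
  rewrite row_free_unit unitmxE det_diag unitfE prodf_seq_neq0.
  by apply/allP => i _; rewrite mxE vbeta_alpha_neq0.
by apply/eqP/(row_free_Vandermonde alpha_inj); apply: leq_trans (leq_subr k m) le_mn.
Qed.

Lemma code_D_sub_C : (code_D <= code_C)%MS.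
Proof.
apply/rV_subP => u /sub_code_DP [g szg ->].
by apply/sub_code_CP; exists (vbeta * g); rewrite ?size_vbetaM.
Qed.

Lemma evalrV_sub_code_D P :
  (size P <= m)%N -> (evalrV alpha P <= code_D)%MS = (evalrV beta P == 0).
Proof.
move=> szP; apply/sub_code_DP/eqP => [[g szg Pg] | P_beta0].
  have -> : P = vbeta * g.
    apply/eqP; rewrite -subr_eq0 -(evalrV_eq0 alpha_inj) ?evalrVB ?Pg ?subrr //.
    by rewrite leq_size_polyB ?(leq_trans szP) ?(leq_trans (size_vbetaM szg)).
  by apply/rowP => j; rewrite evalrVE hornerM (rootP (root_vbeta j)) mul0r mxE.
have vbeta_dvd : vbeta %| P.
  apply: uniq_roots_dvdp; last by rewrite uniq_rootsE; apply/injectiveP/beta_inj.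
  apply/allP => _ /codomP [j ->]; apply/eqP.
  by have /rowP/(_ j) := P_beta0; rewrite !mxE.
exists (P %/ vbeta); last by rewrite divpKC.
by rewrite size_divp -?size_poly_eq0 ?size_vbeta // leq_sub2r.
Qed.

Definition encode x : 'rV[F]_n := evalrV alpha (interp beta x).

Lemma size_interp_beta x : (size (interp beta x) <= m)%N.
Proof. exact: leq_trans (size_interp _ _) le_km. Qed.

Lemma encode_sub x : (encode x <= code_C)%MS.
Proof. by apply/sub_code_CP; exists (interp beta x); rewrite ?size_interp_beta. Qed.

Lemma sub_coset_encode P x : (size P <= m)%N ->
  (evalrV alpha P - encode x <= code_D)%MS = (evalrV beta P == x).
Proof.
move=> szP; rewrite -evalrVB evalrV_sub_code_D ?leq_size_polyB ?size_interp_beta //.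
by rewrite evalrVB (evalrV_interp beta_inj) subr_eq0.
Qed.

Lemma encode_inj x y : (encode x - encode y <= code_D)%MS -> x = y.
Proof.
by rewrite sub_coset_encode ?size_interp_beta // (evalrV_interp beta_inj) => /eqP.
Qed.

Lemma encode_onto c : (c <= code_C)%MS -> exists x, (c - encode x <= code_D)%MS.
Proof. by case/sub_code_CP => P szP ->; exists (evalrV beta P); rewrite sub_coset_encode. Qed.

Lemma coset_encodeP x u : (u - encode x <= code_D)%MS ->
  exists2 P : {poly F}, (size P <= m)%N & u = evalrV alpha P /\ evalrV beta P = x.
Proof.
move=> ux; have : (u <= code_C)%MS.
  by rewrite -(subrK (encode x) u) addmx_sub ?encode_sub ?(submx_trans ux code_D_sub_C).
case/sub_code_CP => P szP uP; exists P => //; split => //.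
by apply/eqP; rewrite -sub_coset_encode // -uP.
Qed.

Lemma wt_code_C u : (u <= code_C)%MS -> u != 0 -> (n - m < wt u)%N.
Proof.
case/sub_code_CP => P szP ->; rewrite (evalrV_eq0 alpha_inj) ?(leq_trans szP) // => P_neq0.
by have := wt_evalrV alpha_inj P_neq0; move: szP; lia.
Qed.

Lemma wt_dual_code_D u : (u <= dualC code_D)%MS -> u != 0 -> (m - k < wt u)%N.
Proof.
move=> u_dual; apply: (wt_dual_evalrV alpha_inj vbeta_alpha_neq0) => g szg.
have vD : (evalrV alpha (vbeta * g) <= code_D)%MS by apply/sub_code_DP; exists g.
by have := dualC_orthogonal u_dual vD; under eq_bigr do rewrite evalrVE.
Qed.

Lemma ccz_n_encode l x y z u v w :
    #|F| = (2 ^ l)%N -> (3 * m <= #|F|)%N ->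
    (u - encode x <= code_D)%MS -> (v - encode y <= code_D)%MS ->
    (w - encode z <= code_D)%MS ->
  ccz_n l u v w = sgn1 (ftrace l (\sum_j x 0 j * y 0 j * z 0 j)).
Proof.
move=> cardF le_3m.
case/coset_encodeP=> P szP [-> <-]; case/coset_encodeP=> Q szQ [-> <-].
case/coset_encodeP=> R szR [-> <-].
rewrite /ccz_n (prod_sgn1_ftrace cardF); congr (sgn1 (ftrace l _)).
have szPQR : (size (P * Q * R)%R <= #|F|.-1)%N.
  apply: leq_trans (size_polyMleq _ _) _.
  by have := size_polyMleq P Q; move: szP szQ szR le_3m; lia.
have := sum_horner_eq0 szPQR; rewrite sum_alpha_beta => /eqP.
rewrite addr_eq0 oppr_pchar2 ?(pchar2 cardF) // => /eqP sum_eq.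
under eq_bigr do rewrite !evalrVE -!hornerM.
by rewrite sum_eq; apply: eq_bigr => j _; rewrite !evalrVE !hornerM.
Qed.

Definition code_basis : 'rV[F]_k -> 'rV[F]_n -> algC := coset_basis code_D encode.

Lemma ccz_n_code_basis l x y z u v w :
    #|F| = (2 ^ l)%N -> (3 * m <= #|F|)%N ->
  ccz_n l u v w * (code_basis x u * code_basis y v * code_basis z w)
    = sgn1 (ftrace l (\sum_j x 0 j * y 0 j * z 0 j))
      * (code_basis x u * code_basis y v * code_basis z w).
Proof.
move=> cardF le_3m; rewrite /code_basis /coset_basis.
have [ux | ?] := boolP (u - encode x <= code_D)%MS; last by rewrite !(mul0r, mulr0).
have [vy | ?] := boolP (v - encode y <= code_D)%MS; last by rewrite !(mul0r, mulr0).
have [wz | ?] := boolP (w - encode z <= code_D)%MS; last by rewrite !(mul0r, mulr0).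
by rewrite (ccz_n_encode cardF le_3m ux vy wz).
Qed.

End TransversalCCZCode.

Lemma code_length_bounds q : (4 %| q)%N ->
  [/\ (3 * q %/ 4 + q %/ 4 = q)%N, (q %/ 4 <= q %/ 3)%N, (q %/ 3 <= 3 * q %/ 4)%N,
      (3 * (q %/ 3) <= q)%N & (q %/ 3 - q %/ 4 + 1 <= 3 * q %/ 4 - q %/ 3 + 1)%N].
Proof. by case/dvdnP => t ->; split; lia. Qed.

Lemma enum_val_cast_bij (T : finType) N (eN : N = #|T|) :
  bijective (fun i : 'I_N => enum_val (cast_ord eN i)).
Proof.
exists (fun t => cast_ord (esym eN) (enum_rank t)) => [i | t].
  by rewrite enum_valK cast_ordK.
by rewrite cast_ordKV enum_rankK.
Qed.

Theorem theorem5p1 (l : nat) (hl : (3 <= l)%N) (F : finFieldType)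
    (hF : #|F| = (2 ^ l)%N) :
  exists (C1 C2 : 'M[F]_(3 * 2 ^ l %/ 4))
         (bar : 'rV[F]_(2 ^ l %/ 4) -> 'rV[F]_(3 * 2 ^ l %/ 4) -> algC),
    [/\ (dualC C2 <= C1)%MS,
        (\rank C1 - \rank (dualC C2))%N = (2 ^ l %/ 4)%N,
        (forall u : 'rV[F]_(3 * 2 ^ l %/ 4),
            ((u <= C1)%MS && ~~ (u <= dualC C2)%MS)
            || ((u <= C2)%MS && ~~ (u <= dualC C1)%MS) ->
            (2 ^ l %/ 3 - 2 ^ l %/ 4 + 1 <= wt u)%N) &
    [/\
        (forall x, in_css C1 C2 (bar x)),
        (forall x y, inner (bar x) (bar y) = (x == y)%:R),
        (forall psi, in_css C1 C2 psi ->
           exists b : 'rV[F]_(2 ^ l %/ 4) -> algC,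
             forall u, psi u = \sum_x b x * bar x u) &
        (forall x y z (u v w : 'rV[F]_(3 * 2 ^ l %/ 4)),
           ccz_n l u v w * (bar x u * bar y v * bar z w)
           = sgn1 (ftrace l (\sum_(i < 2 ^ l %/ 4) x 0 i * y 0 i * z 0 i))
             * (bar x u * bar y v * bar z w))]].
Proof.
have [nk le_km le_mn le_3m dist_C] := code_length_bounds (dvdn_exp2l 2 (ltnW hl)).
have le_3mF : (3 * (2 ^ l %/ 3) <= #|F|)%N by rewrite hF.
pose e := fun i => enum_val (cast_ord (etrans nk (esym hF)) i).
have e_bij : bijective e := enum_val_cast_bij _.
exists (code_C (2 ^ l %/ 3) e), (dualC (code_D (2 ^ l %/ 3) e)),
  (code_basis (2 ^ l %/ 3) e).
split.
- by rewrite dualCK; exact: code_D_sub_C.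
- by rewrite dualCK rank_code_C ?rank_code_D //; lia.
- move=> u; rewrite dualCK => /orP [/andP [uC uD] | /andP [uD uC]].
    have u_neq0 : u != 0 by apply: contraNneq uD => ->; rewrite sub0mx.
    by have := wt_code_C e_bij le_km le_mn uC u_neq0; lia.
  have u_neq0 : u != 0 by apply: contraNneq uC => ->; rewrite sub0mx.
  by have := wt_dual_code_D e_bij uD u_neq0; lia.
split.
- exact: in_css_coset_basis (encode_sub _ le_km).
- by apply: coset_basis_orthonormal => x y; apply: encode_inj.
- by apply: coset_basis_spanning => [x y | c]; [apply: encode_inj | apply: encode_onto].
- by move=> x y z u v w; rewrite ccz_n_code_basis.
Qed.
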